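(* Let $s, p, m, k \in \mathbb N$ with $m \geq s$. Then \begin{align*} \sum_{n=1}^\infty\frac{(-1)^{n+1}H_n^{(p,s)}}{n^{m}\binom{n+k}{k}} =\sum_{\ell_{1}=0}^{s-1} \sum_{\ell_{2}=0}^{s-1-\ell_{1}}a(s,\ell_{1},\ell_{2}) \sum_{r=1}^{k}(-1)^{r+1} r \binom{k}{r}\, S(p-\ell_{1},m-\ell_{2},1,r,1)\,, \end{align*} where $S(q,t,1,r,1)=\sum_{n=1}^\infty \frac{(-1)^{n+1}H_n^{(q)}}{n^{t}(n+r)}$. Consequently this sum can be expressed in terms of classical alternating Euler sums, zeta values and generalized (alternating) harmonic numbers.
   Context: $\mathbb N=\{1,2,\dots\}$, $\mathbb N_0=\mathbb N\cup\{0\}$. For $n\in\mathbb N_0$ and $q\in\mathbb N$, $H_n^{(q)}=\sum_{j=1}^n j^{-q}$; for an integer $q\ge 0$, $H_n^{(-q)}$ denotes $\sum_{\ell=1}^n \ell^{q}$ (so $H_n^{(0)}=n$). Generalized hyperharmonic numbers: $H_n^{(p,1)}=H_n^{(p)}$, $H_n^{(p,r)}=\sum_{j=1}^n H_j^{(p,r-1)}$ for $r\ge2$. For $q\in\mathbb Z$ and $t,r\in\mathbb N$, $S(q,t,1,r,1):=\sum_{n=1}^\infty \frac{(-1)^{n+1}H_n^{(q)}}{n^{t}(n+r)}$. Bernoulli numbers $B_j^{+}$: $\frac{x}{1-e^{-x}}=\sum_{j\ge0}B_j^{+}\frac{x^j}{j!}$. The rational coefficients $a(r,m,j)$ ($r\in\mathbb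 N$, $0\le m\le r-1$, $0\le j\le r-1-m$) are defined by $a(1,0,0)=1$ and, for $r\ge1$: $a(r+1,r,0)=-\sum_{m=0}^{r-1} \frac{a(r,m,r-m-1)}{r-m}$; $a(r+1,m,\ell)=\sum_{j=\ell-1}^{r-1-m} \frac{a(r,m,j)}{j+1} \binom{j+1}{j-\ell+1}B_{j-\ell+1}^{+}$ for $0\leq m \leq r-1$, $1\leq \ell \leq r-m$; $a(r+1,m,0)=-\sum_{y=0}^{m} \sum_{j=\max\{0, m-y-1\}}^{r-1-y}a(r,y,j)D(r,m,j,y)$ for $0\leq m \leq r-1$, where $D(r,m,j,y)=\sum_{\ell=\max\{0, m-y-1\}}^{j} \frac{1}{j+1} \binom{j+1}{j-\ell}B_{j-\ell}^{+}\binom{\ell+1}{m-y}(-1)^{1+\ell-m+y}$. (These satisfy the known identity $H_n^{(p,r)}=\sum_{m=0}^{r-1}\sum_{j=0}^{r-1-m}a(r,m,j)n^jH_n^{(p-m)}$ for all $n,p\in\mathbb N$.) *)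

From Stdlib Require Import Reals Arith ZArith List.
From Coquelicot Require Import Coquelicot.
Open Scope R_scope.

(* sumR lo hi f = f lo + f (lo+1) + ... + f hi  (empty if hi < lo) *)
Fixpoint sumN (f : nat -> R) (lo cnt : nat) : R :=
  match cnt with
  | O => 0
  | S c => f lo + sumN f (S lo) c
  end.
Definition sumR (lo hi : nat) (f : nat -> R) : R := sumN f lo (S hi - lo).

Definition binomR (n k : nat) : R := if (k <=? n)%nat then Binomial.C n k else 0.

(* Bernoulli numbers B_j^+ (x/(1-e^{-x}) = sum B_j^+ x^j/j!), via the
   equivalent standard recurrence sum_{i=0}^{n} C(n+1,i) B_i^+ = n+1. *)
Fixpoint bern_list (n : nat) : list R :=
  match n with
  | O => 1 :: nil
  | S n' =>
      let l := bern_list n' in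
      let s := fold_right Rplus 0
                 (map (fun i => binomR (S n) i * nth i l 0) (seq 0 n)) in
      l ++ ((INR (S n) - s) / INR (S n)) :: nil
  end.
Definition bernp (j : nat) : R := nth j (bern_list j) 0.

Definition H (n : nat) (q : Z) : R :=
  sumR 1 n (fun j => powerRZ (INR j) (- q)).

(* hh p r' n = H_n^{(p, r'+1)} *)
Fixpoint hh (p : Z) (r' : nat) (n : nat) : R :=
  match r' with
  | O => H n p
  | S r0 => sumR 1 n (fun j => hh p r0 j)
  end.
Definition hyperH (p : Z) (r n : nat) : R := hh p (r - 1) n.

(* a0 r' m j = a(r'+1, m, j) *)
Fixpoint a0 (r' : nat) (m j : nat) : R :=
  match r' with
  | O => if andb (m =? 0)%nat (j =? 0)%nat then 1 else 0
  | S r0 =>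
      let r := S r0 in
      let prev := a0 r0 in
      if (m =? r)%nat then
        (if (j =? 0)%nat then
           - sumR 0 (r - 1) (fun m' => prev m' (r - m' - 1)%nat / INR (r - m'))
         else 0)
      else if (m <=? r - 1)%nat then
        (if (j =? 0)%nat then
           - sumR 0 m (fun y =>
               sumR (m - y - 1) (r - 1 - y) (fun j' =>
                 prev y j' *
                 sumR (m - y - 1) j' (fun l =>
                   / INR (j' + 1) * binomR (j' + 1) (j' - l) * bernp (j' - l)
                   * binomR (l + 1) (m - y) * (-1) ^ (1 + l + y - m))))
         else if (j <=? r - m)%nat then
           sumR (j - 1) (r - 1 - m) (fun j' =>
             prev m j' / INR (j' + 1) * binomR (j' + 1) (j' + 1 - j)
             * bernp (j' + 1 - j))
         else 0)
      else 0
  end.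
Definition a (r m j : nat) : R := a0 (r - 1) m j.

Definition S_term (q : Z) (t r : nat) (n : nat) : R :=
  let N := S n in
  (-1) ^ (N + 1) * H N q / (INR N ^ t * (INR N + INR r)).
Definition Sser (q : Z) (t r : nat) : R := Series (S_term q t r).

(* Three ingredients.
   (1) H_n^(p,s) = sum_(l1,l2) a(s,l1,l2) n^l2 H_n^(p-l1), by induction on s: summing the
   expansion for s over n leads to sums sum_(i<=n) i^j H_i^(q), which Abel summation against
   the Faulhaber polynomials P_j (P_j(x+1) - P_j(x) = (x+1)^j, with Bernoulli coefficients)
   turns into P_j(n) H_n^(q) - sum_u [x^u]P_j(x-1) H_n^(q-u); collecting coefficients gives
   exactly the recurrence defining a.
   (2) Partial fractions: 1 / binom(n+k,k) = sum_(r=1..k) (-1)^(r+1) r binom(k,r) / (n+r).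
   (3) For t >= 1 and q + t >= 2 the series S(q,t,1,r,1) converges absolutely, its n-th term
   being at most H_n / n^2, which is summable by telescoping.
   So the n-th term of the left-hand series is a fixed finite linear combination of the n-th
   terms of the series S(p-l1, m-l2, 1, r, 1), and these can be summed termwise. *)

From Stdlib Require Import Reals ZArith Lia Lra List.
From Coquelicot Require Import Coquelicot.
Open Scope R_scope.

Ltac case_nat_tests := repeat match goal with
  | |- context [Nat.leb ?a ?b] => destruct (Nat.leb_spec a b)
  | |- context [Nat.eqb ?a ?b] => destruct (Nat.eqb_spec a b)
  end; cbn [andb orb negb].

(** * Finite sums *)

Lemma sumN_ext f g lo c : (forall i, (lo <= i < lo + c)%nat -> f i = g i) ->
  sumN f lo c = sumN g lo c.
Proof.
  revert lo; induction c; intros lo Hfg; simpl; auto.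
  rewrite (Hfg lo) by lia; rewrite (IHc (S lo)); auto.
  intros; apply Hfg; lia.
Qed.

Lemma sumN_plus f g lo c : sumN (fun i => f i + g i) lo c = sumN f lo c + sumN g lo c.
Proof. revert lo; induction c; intros lo; simpl; [lra | rewrite IHc; lra]. Qed.

Lemma sumN_scal a f lo c : sumN (fun i => a * f i) lo c = a * sumN f lo c.
Proof. revert lo; induction c; intros lo; simpl; [lra | rewrite IHc; lra]. Qed.

Lemma sumN_const0 lo c : sumN (fun _ => 0) lo c = 0.
Proof. revert lo; induction c; intros lo; simpl; [lra | rewrite IHc; lra]. Qed.

Lemma sumN_le f g lo c : (forall i, (lo <= i < lo + c)%nat -> f i <= g i) ->
  sumN f lo c <= sumN g lo c.
Proof.
  revert lo; induction c; intros lo Hfg; simpl; [lra |].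
  apply Rplus_le_compat; [apply Hfg; lia | apply IHc; intros; apply Hfg; lia].
Qed.

Lemma sumN_split f lo c1 c2 : sumN f lo (c1 + c2) = sumN f lo c1 + sumN f (lo + c1) c2.
Proof.
  revert lo; induction c1; intros lo; simpl; [rewrite Nat.add_0_r; lra |].
  rewrite IHc1; replace (S lo + c1)%nat with (lo + S c1)%nat by lia; lra.
Qed.

Lemma sumN_swap (F : nat -> nat -> R) lo1 c1 lo2 c2 :
  sumN (fun i => sumN (fun j => F i j) lo2 c2) lo1 c1 =
  sumN (fun j => sumN (fun i => F i j) lo1 c1) lo2 c2.
Proof.
  revert lo1; induction c1; intros lo1; simpl.
  - symmetry; induction c2 in lo2 |- *; simpl; auto; rewrite IHc2; lra.
  - rewrite IHc1, <- sumN_plus; reflexivity.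
Qed.

Lemma sumR_ext f g lo hi : (forall i, (lo <= i <= hi)%nat -> f i = g i) ->
  sumR lo hi f = sumR lo hi g.
Proof. intros Hfg; apply sumN_ext; intros; apply Hfg; lia. Qed.

Lemma sumR_plus f g lo hi : sumR lo hi (fun i => f i + g i) = sumR lo hi f + sumR lo hi g.
Proof. apply sumN_plus. Qed.

Lemma sumR_scal a f lo hi : sumR lo hi (fun i => a * f i) = a * sumR lo hi f.
Proof. apply sumN_scal. Qed.

Lemma sumR_scal_r a f lo hi : sumR lo hi (fun i => f i * a) = sumR lo hi f * a.
Proof. rewrite Rmult_comm, <- sumR_scal; apply sumR_ext; intros; lra. Qed.

Lemma sumR_opp f lo hi : sumR lo hi (fun i => - f i) = - sumR lo hi f.
Proof.
  replace (- sumR lo hi f) with (-1 * sumR lo hi f) by lra.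
  rewrite <- sumR_scal; apply sumR_ext; intros; lra.
Qed.

Lemma sumR_minus f g lo hi : sumR lo hi (fun i => f i - g i) = sumR lo hi f - sumR lo hi g.
Proof. unfold Rminus; rewrite sumR_plus, sumR_opp; reflexivity. Qed.

Lemma sumR_le f g lo hi : (forall i, (lo <= i <= hi)%nat -> f i <= g i) ->
  sumR lo hi f <= sumR lo hi g.
Proof. intros Hfg; apply sumN_le; intros; apply Hfg; lia. Qed.

Lemma sumR_eq0 f lo hi : (forall i, (lo <= i <= hi)%nat -> f i = 0) -> sumR lo hi f = 0.
Proof. intros Hf; rewrite (sumR_ext f (fun _ => 0)) by auto; apply sumN_const0. Qed.

Lemma sumR_empty f lo hi : (hi < lo)%nat -> sumR lo hi f = 0.
Proof. intros Hlt; unfold sumR; replace (S hi - lo)%nat with 0%nat by lia; reflexivity. Qed.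

Lemma sumR_swap (F : nat -> nat -> R) lo1 hi1 lo2 hi2 :
  sumR lo1 hi1 (fun i => sumR lo2 hi2 (fun j => F i j)) =
  sumR lo2 hi2 (fun j => sumR lo1 hi1 (fun i => F i j)).
Proof. apply sumN_swap. Qed.

Lemma sumR_singleton f c : sumR c c f = f c.
Proof. unfold sumR; replace (S c - c)%nat with 1%nat by lia; simpl; lra. Qed.

Lemma sumR_first f lo hi : (lo <= hi)%nat -> sumR lo hi f = f lo + sumR (S lo) hi f.
Proof.
  intros Hle; unfold sumR.
  replace (S hi - lo)%nat with (S (S hi - S lo)) by lia; reflexivity.
Qed.

Lemma sumR_last f lo hi : (lo <= S hi)%nat -> sumR lo (S hi) f = sumR lo hi f + f (S hi).
Proof.
  intros Hle; unfold sumR.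
  replace (S (S hi) - lo)%nat with ((S hi - lo) + 1)%nat by lia.
  rewrite sumN_split; cbn [sumN]; replace (lo + (S hi - lo))%nat with (S hi) by lia; lra.
Qed.

Lemma sumR_shift f lo hi : sumR (S lo) (S hi) f = sumR lo hi (fun i => f (S i)).
Proof.
  unfold sumR; replace (S (S hi) - S lo)%nat with (S hi - lo)%nat by lia.
  generalize (S hi - lo)%nat; intros c; revert lo; induction c; intros lo; simpl; auto.
  rewrite IHc; reflexivity.
Qed.

Lemma sumR_indicator f lo hi K : (hi <= K)%nat ->
  sumR lo hi f = sumR 0 K (fun i => if andb (lo <=? i)%nat (i <=? hi)%nat then f i else 0).
Proof.
  intros HK; destruct (Nat.leb_spec lo hi).
  - unfold sumR; replace (S K - 0)%nat with (lo + (S hi - lo) + (K - hi))%nat by lia.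
    rewrite !sumN_split, Nat.add_0_l.
    rewrite (sumN_ext _ (fun _ => 0) 0 lo) by (intros; case_nat_tests; auto; lia).
    rewrite (sumN_ext _ (fun _ => 0) (lo + (S hi - lo))) by (intros; case_nat_tests; auto; lia).
    rewrite (sumN_ext (fun i => if andb (lo <=? i)%nat (i <=? hi)%nat then f i else 0) f lo)
      by (intros; case_nat_tests; auto; lia).
    rewrite !sumN_const0; lra.
  - rewrite sumR_empty by lia; symmetry; apply sumR_eq0; intros; case_nat_tests; auto; lia.
Qed.

Lemma sumR_indicator_hi f lo hi K : (hi <= K)%nat ->
  sumR lo hi f = sumR lo K (fun i => if (i <=? hi)%nat then f i else 0).
Proof.
  intros HK; rewrite (sumR_indicator f lo hi K HK), (sumR_indicator _ lo K K) by lia.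
  apply sumR_ext; intros; case_nat_tests; auto; lia.
Qed.

Lemma sumR_extend f K K' : (K <= K')%nat -> (forall i, (K < i <= K')%nat -> f i = 0) ->
  sumR 0 K f = sumR 0 K' f.
Proof.
  intros HK Hf; rewrite (sumR_indicator f 0 K K') by auto; apply sumR_ext; intros i Hi.
  case_nat_tests; auto; try lia; symmetry; apply Hf; lia.
Qed.

Lemma sumR_single f K c : (c <= K)%nat -> (forall i, (i <= K)%nat -> i <> c -> f i = 0) ->
  sumR 0 K f = f c.
Proof.
  intros Hc Hf; rewrite <- (sumR_singleton f c), (sumR_indicator f c c K) by auto.
  apply sumR_ext; intros; case_nat_tests; auto; apply Hf; lia.
Qed.

Lemma sumR_reverse f n : sumR 0 n f = sumR 0 n (fun i => f (n - i)%nat).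
Proof.
  revert f; induction n; intros f; [rewrite !sumR_singleton; reflexivity |].
  rewrite sumR_first, sumR_shift, IHn, (sumR_last (fun i => f (S n - i)%nat)), Nat.sub_diag
    by lia.
  rewrite (sumR_ext (fun i => f (S (n - i))) (fun i => f (S n - i)%nat)); [lra |].
  intros; f_equal; lia.
Qed.

Lemma sumR_antidiagonal (F : nat -> nat -> R) n :
  sumR 0 n (fun y => sumR 0 (n - y) (fun u => F y u)) =
  sumR 0 n (fun d => sumR 0 d (fun y => F y (d - y)%nat)).
Proof.
  induction n; [rewrite !sumR_singleton; reflexivity |].
  rewrite (sumR_last _ 0 n), (sumR_last (fun d => sumR 0 d _) 0 n) by lia.
  rewrite (sumR_ext (fun y => sumR 0 (S n - y) (fun u => F y u))
     (fun y => sumR 0 (n - y) (fun u => F y u) + F y (S n - y)%nat)).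
  2:{ intros i Hi; replace (S n - i)%nat with (S (n - i)) by lia.
      rewrite sumR_last by lia; f_equal. }
  rewrite sumR_plus, IHn, Nat.sub_diag, sumR_singleton.
  rewrite (sumR_last (fun y => F y (S n - y)%nat)), Nat.sub_diag by lia; lra.
Qed.

Lemma sumR_triangle_swap (F : nat -> nat -> R) n :
  sumR 0 n (fun i => sumR 0 (n - i) (fun t => F i t)) =
  sumR 0 n (fun t => sumR 0 (n - t) (fun i => F i t)).
Proof.
  rewrite (sumR_ext _ (fun i => sumR 0 n
     (fun t => if andb (0 <=? t)%nat (t <=? n - i)%nat then F i t else 0)))
    by (intros; apply sumR_indicator; lia).
  rewrite sumR_swap; apply sumR_ext; intros t Ht.
  rewrite (sumR_indicator _ 0 (n - t) n) by lia.
  apply sumR_ext; intros; case_nat_tests; auto; lia.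
Qed.

Lemma sum_f_R0_sumR f n : sum_f_R0 f n = sumR 0 n f.
Proof.
  induction n; simpl; [rewrite sumR_singleton; reflexivity |].
  rewrite sumR_last, IHn by lia; reflexivity.
Qed.

Lemma sumR_const c n : sumR 1 n (fun _ => c) = INR n * c.
Proof.
  induction n; [rewrite sumR_empty by lia; simpl; ring |].
  rewrite sumR_last, IHn, S_INR by lia; ring.
Qed.

Lemma fold_right_Rplus_map_seq f lo c : fold_right Rplus 0 (map f (seq lo c)) = sumN f lo c.
Proof. revert lo; induction c; intros lo; simpl; auto; rewrite IHc; reflexivity. Qed.

(** * Binomial coefficients and Bernoulli numbers *)

Lemma INR_fact_S n : INR (fact (S n)) = INR (S n) * INR (fact n).
Proof. apply mult_INR. Qed.

Lemma binomR_C n k : (k <= n)%nat -> binomR n k = Binomial.C n k.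
Proof. intros Hk; unfold binomR; destruct (Nat.leb_spec k n); [reflexivity | lia]. Qed.

Lemma binomR_fact n k : (k <= n)%nat ->
  binomR n k = INR (fact n) / (INR (fact k) * INR (fact (n - k))).
Proof. apply binomR_C. Qed.

Lemma binomR_gt n k : (n < k)%nat -> binomR n k = 0.
Proof. intros Hk; unfold binomR; destruct (Nat.leb_spec k n); [lia | reflexivity]. Qed.

Lemma binomR_pos n k : (k <= n)%nat -> 0 < binomR n k.
Proof.
  intros Hk; rewrite binomR_fact by auto; apply Rdiv_lt_0_compat;
    [| apply Rmult_lt_0_compat]; apply lt_0_INR, lt_O_fact.
Qed.

Lemma binomR_n0 n : binomR n 0 = 1.
Proof.
  rewrite binomR_fact, Nat.sub_0_r by lia; simpl; field; apply INR_fact_neq_0.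
Qed.

Lemma binomR_nn n : binomR n n = 1.
Proof.
  rewrite binomR_fact, Nat.sub_diag by lia; simpl; field; apply INR_fact_neq_0.
Qed.

Lemma binomR_succ_diag n : binomR (S n) n = INR (S n).
Proof.
  rewrite binomR_fact by lia; replace (S n - n)%nat with 1%nat by lia.
  rewrite INR_fact_S; simpl; field; apply INR_fact_neq_0.
Qed.

Lemma binomR_mul_swap n i t : (i + t <= n)%nat ->
  binomR n i * binomR (n - i) t = binomR n t * binomR (n - t) i.
Proof.
  intros Hit; rewrite !binomR_fact by lia.
  replace (n - t - i)%nat with (n - i - t)%nat by lia.
  field; repeat split; apply INR_fact_neq_0.
Qed.

Lemma binomR_succ_sub n k : (k <= n)%nat ->
  binomR (S n) k * INR (S n - k) / INR (S n) = binomR n k.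
Proof.
  intros Hk; rewrite !binomR_fact by lia.
  replace (S n - k)%nat with (S (n - k)) by lia; rewrite !INR_fact_S.
  field; repeat split; try apply INR_fact_neq_0; apply not_0_INR; lia.
Qed.

Lemma binomR_absorb n k : (k <= n)%nat ->
  INR (S k) * binomR (S n) (S k) = INR (S n) * binomR n k.
Proof.
  intros Hk; rewrite !binomR_fact by lia; replace (S n - S k)%nat with (n - k)%nat by lia.
  rewrite !INR_fact_S; field; repeat split; try apply INR_fact_neq_0; apply not_0_INR; lia.
Qed.

Lemma binomR_add_succ n k :
  binomR (n + S k) (S k) = INR (S n) / INR (S k) * binomR (S n + k) k.
Proof.
  rewrite !binomR_fact by lia.
  replace (n + S k - S k)%nat with n by lia; replace (S n + k - k)%nat with (S n) by lia.
  replace (S n + k)%nat with (n + S k)%nat by lia; rewrite !INR_fact_S.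
  field; repeat split; try apply INR_fact_neq_0; apply not_0_INR; lia.
Qed.

Lemma pow_add1_sub x n :
  (x + 1) ^ S n - x ^ S n = sumR 0 n (fun t => binomR (S n) t * x ^ t).
Proof.
  rewrite binomial, sum_f_R0_sumR, sumR_last, Nat.sub_diag by lia.
  unfold Binomial.C at 2; rewrite Nat.sub_diag; simpl (fact 0); simpl (1 ^ 0).
  replace (INR (fact (S n)) / (INR (fact (S n)) * INR 1)) with 1
    by (rewrite INR_1; field; apply INR_fact_neq_0).
  ring_simplify; apply sumR_ext; intros t Ht.
  rewrite pow1, binomR_C by lia; ring.
Qed.

Lemma pow_sub1 x n : (x - 1) ^ n = sumR 0 n (fun u => binomR n u * x ^ u * (-1) ^ (n - u)).
Proof.
  replace (x - 1) with (x + -1) by ring; rewrite binomial, sum_f_R0_sumR.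
  apply sumR_ext; intros; rewrite binomR_C by lia; reflexivity.
Qed.

Lemma alt_sum_binomR n : (1 <= n)%nat -> sumR 1 n (fun r => (-1) ^ (r + 1) * binomR n r) = 1.
Proof.
  intros Hn; assert (E := binomial (-1) 1 n).
  replace (-1 + 1) with 0 in E by ring.
  rewrite sum_f_R0_sumR, sumR_first, Nat.sub_0_r, pow_i in E by lia.
  unfold Binomial.C at 1 in E; rewrite Nat.sub_0_r in E; simpl (fact 0) in E.
  replace (INR (fact n) / (INR 1 * INR (fact n))) with 1 in E
    by (rewrite INR_1; field; apply INR_fact_neq_0).
  rewrite (sumR_ext _ (fun r => - (Binomial.C n r * (-1) ^ r * 1 ^ (n - r)))).
  - rewrite sumR_opp; rewrite pow1 in E; simpl in E; lra.
  - intros r Hr; rewrite pow1, binomR_C, pow_add by lia; ring.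
Qed.

Lemma bern_list_length n : length (bern_list n) = S n.
Proof. induction n; simpl; auto; rewrite length_app, IHn; simpl; lia. Qed.

Lemma nth_bern_list n i : (i <= n)%nat -> nth i (bern_list n) 0 = bernp i.
Proof.
  intros Hi; unfold bernp; induction n; [replace i with 0%nat by lia; reflexivity |].
  destruct (Nat.eq_dec i (S n)); [subst; reflexivity |].
  cbn [bern_list]; rewrite app_nth1 by (rewrite bern_list_length; lia); apply IHn; lia.
Qed.

Lemma bernp_recurrence n : sumR 0 n (fun i => binomR (S n) i * bernp i) = INR (S n).
Proof.
  destruct n; [rewrite sumR_singleton, binomR_n0; change (bernp 0) with 1; simpl; lra |].
  rewrite sumR_last, binomR_succ_diag by lia.
  unfold bernp at 2; cbn [bern_list].
  rewrite app_nth2, bern_list_length, Nat.sub_diag by (rewrite bern_list_length; lia).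
  cbn [nth]; unfold sumR; rewrite Nat.sub_0_r.
  enough (Hsum : fold_right Rplus 0 (map (fun i => binomR (S (S n)) i * nth i (bern_list n) 0)
            (seq 0 (S n))) = sumN (fun i => binomR (S (S n)) i * bernp i) 0 (S n))
    by (rewrite Hsum; field; apply not_0_INR; lia).
  rewrite fold_right_Rplus_map_seq; apply sumN_ext; intros; rewrite nth_bern_list by lia.
  reflexivity.
Qed.

(** * Faulhaber polynomials and summation by parts *)

Definition faulhaber_coef (j l : nat) : R :=
  / INR (j + 1) * binomR (j + 1) (j + 1 - l) * bernp (j + 1 - l).

Definition faulhaber (j : nat) (x : R) : R :=
  sumR 1 (S j) (fun l => faulhaber_coef j l * x ^ l).

Lemma faulhaber_reverse j x : faulhaber j x =
  sumR 0 j (fun i => / INR (j + 1) * binomR (j + 1) i * bernp i * x ^ (S j - i)).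
Proof.
  unfold faulhaber; rewrite sumR_shift, sumR_reverse; apply sumR_ext; intros i Hi.
  unfold faulhaber_coef; replace (j + 1 - S (j - i))%nat with i by lia.
  replace (S (j - i)) with (S j - i)%nat by lia; reflexivity.
Qed.

(* Expanding both sides in powers of x, the coefficient of x^t reduces to the
   Bernoulli recurrence of order j - t. *)
Lemma faulhaber_diff j x : faulhaber j (x + 1) - faulhaber j x = (x + 1) ^ j.
Proof.
  rewrite !faulhaber_reverse, <- sumR_minus.
  rewrite (sumR_ext _ (fun i => sumR 0 (j - i) (fun t =>
     / INR (j + 1) * binomR (j + 1) i * bernp i * (binomR (S (j - i)) t * x ^ t)))).
  2:{ intros i Hi; rewrite <- Rmult_minus_distr_l.
      replace (S j - i)%nat with (S (j - i)) by lia.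
      rewrite pow_add1_sub, <- sumR_scal; reflexivity. }
  rewrite sumR_triangle_swap, binomial, sum_f_R0_sumR; apply sumR_ext; intros t Ht.
  rewrite (sumR_ext _ (fun i => (/ INR (j + 1) * binomR (j + 1) t * x ^ t) *
     (binomR (S (j - t)) i * bernp i))).
  2:{ intros i Hi; replace (S (j - i)) with (j + 1 - i)%nat by lia.
      transitivity ((/ INR (j + 1) * bernp i * x ^ t) *
                    (binomR (j + 1) i * binomR (j + 1 - i) t)); [ring |].
      rewrite binomR_mul_swap by lia; replace (j + 1 - t)%nat with (S (j - t)) by lia; ring. }
  rewrite sumR_scal, bernp_recurrence, pow1, Rmult_1_r, <- binomR_C by lia.
  rewrite <- (binomR_succ_sub j t) by lia.
  replace (j + 1)%nat with (S j) by lia; replace (S (j - t)) with (S j - t)%nat by lia.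
  field; apply not_0_INR; lia.
Qed.

Lemma H_0 q : H 0 q = 0.
Proof. apply sumR_empty; lia. Qed.

Lemma H_succ n q : H (S n) q = H n q + powerRZ (INR (S n)) (- q).
Proof. unfold H; rewrite sumR_last by lia; reflexivity. Qed.

Lemma sum_pow_mul_H j q n :
  sumR 1 n (fun i => INR i ^ j * H i q) =
  faulhaber j (INR n) * H n q
  - sumR 1 n (fun t => powerRZ (INR t) (- q) * faulhaber j (INR t - 1)).
Proof.
  induction n; [rewrite !sumR_empty, H_0 by lia; lra |].
  rewrite !sumR_last, IHn, H_succ by lia.
  replace (INR (S n) - 1) with (INR n) by (rewrite S_INR; lra).
  pose proof (faulhaber_diff j (INR n)) as Hdiff; rewrite <- S_INR in Hdiff.
  replace (faulhaber j (INR (S n))) with (faulhaber j (INR n) + INR (S n) ^ j) by lra; ring.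
Qed.

Definition faulhaber_pred_coef (j u : nat) : R :=
  sumR 1 (S j) (fun l => faulhaber_coef j l * binomR l u * (-1) ^ (l - u)).

Lemma faulhaber_pred j x :
  faulhaber j (x - 1) = sumR 0 (S j) (fun u => faulhaber_pred_coef j u * x ^ u).
Proof.
  unfold faulhaber, faulhaber_pred_coef.
  rewrite (sumR_ext _ (fun l => sumR 0 (S j) (fun u =>
     faulhaber_coef j l * binomR l u * (-1) ^ (l - u) * x ^ u))).
  - rewrite sumR_swap; apply sumR_ext; intros; apply sumR_scal_r.
  - intros l Hl; rewrite pow_sub1, (sumR_extend _ l (S j)), <- sumR_scal by
      (try lia; intros; rewrite binomR_gt by lia; ring).
    apply sumR_ext; intros; ring.
Qed.

Lemma powerRZ_INR_mul_pow t q u : (1 <= t)%nat ->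
  powerRZ (INR t) (- q) * INR t ^ u = powerRZ (INR t) (- (q - Z.of_nat u)).
Proof.
  intros Ht; rewrite pow_powerRZ, <- powerRZ_add by (apply not_0_INR; lia).
  f_equal; lia.
Qed.

Lemma sum_H_mul_faulhaber_pred j q n :
  sumR 1 n (fun t => powerRZ (INR t) (- q) * faulhaber j (INR t - 1)) =
  sumR 0 (S j) (fun u => faulhaber_pred_coef j u * H n (q - Z.of_nat u)).
Proof.
  unfold H; rewrite (sumR_ext _ (fun t => sumR 0 (S j) (fun u =>
     faulhaber_pred_coef j u * powerRZ (INR t) (- (q - Z.of_nat u))))).
  - rewrite sumR_swap; apply sumR_ext; intros; apply sumR_scal.
  - intros t Ht; rewrite faulhaber_pred, <- sumR_scal; apply sumR_ext; intros u Hu.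
    rewrite <- powerRZ_INR_mul_pow by lia; ring.
Qed.

Lemma faulhaber_pred_coef_gt j u : (S j < u)%nat -> faulhaber_pred_coef j u = 0.
Proof.
  intros Hu; apply sumR_eq0; intros l Hl; rewrite binomR_gt by lia; ring.
Qed.

Lemma faulhaber_pred_coef_top j : faulhaber_pred_coef j (S j) = / INR (S j).
Proof.
  unfold faulhaber_pred_coef; rewrite sumR_last by lia.
  rewrite sumR_eq0 by (intros l Hl; rewrite binomR_gt by lia; ring).
  rewrite binomR_nn, Nat.sub_diag; unfold faulhaber_coef.
  replace (j + 1 - S j)%nat with 0%nat by lia; replace (j + 1)%nat with (S j) by lia.
  rewrite binomR_n0; change (bernp 0) with 1; simpl; ring.
Qed.

(** * The coefficients a(r,m,j) and the expansion of hyperharmonic numbers *)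

(* The paper's D(r,m,j,y), which does not depend on r. *)
Definition D_coef (j y m : nat) : R :=
  sumR (m - y - 1) j (fun l =>
    / INR (j + 1) * binomR (j + 1) (j - l) * bernp (j - l)
    * binomR (l + 1) (m - y) * (-1) ^ (1 + l + y - m)).

Lemma a0_succ r' m j : a0 (S r') m j =
  if (m =? S r')%nat then
    (if (j =? 0)%nat then
       - sumR 0 r' (fun m' => a0 r' m' (S r' - m' - 1) / INR (S r' - m'))
     else 0)
  else if (m <=? r')%nat then
    (if (j =? 0)%nat then
       - sumR 0 m (fun y => sumR (m - y - 1) (r' - y) (fun j' => a0 r' y j' * D_coef j' y m))
     else if (j <=? S r' - m)%nat then
       sumR (j - 1) (r' - m) (fun j' => a0 r' m j' * faulhaber_coef j' j)
     else 0)
  else 0.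
Proof.
  cbn [a0]; replace (S r' - 1)%nat with r' by lia; unfold D_coef, faulhaber_coef.
  destruct (m =? S r')%nat, (m <=? r')%nat, (j =? 0)%nat, (j <=? S r' - m)%nat; auto.
  apply sumR_ext; intros; unfold Rdiv; ring.
Qed.

Lemma a0_eq0 r' m j : (r' < m + j)%nat -> a0 r' m j = 0.
Proof.
  intros Hlt; destruct r' as [| r'].
  - destruct m, j; simpl; auto; lia.
  - rewrite a0_succ; case_nat_tests; auto; lia.
Qed.

Lemma D_coef_eq_faulhaber_pred_coef j y m : (y <= m)%nat ->
  D_coef j y m = faulhaber_pred_coef j (m - y).
Proof.
  intros Hym; unfold D_coef, faulhaber_pred_coef; rewrite sumR_shift.
  rewrite (sumR_indicator _ (m - y - 1) j j) by lia; apply sumR_ext; intros l Hl.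
  case_nat_tests; try lia.
  - unfold faulhaber_coef; replace (j + 1 - S l)%nat with (j - l)%nat by lia.
    replace (l + 1)%nat with (S l) by lia.
    replace (1 + l + y - m)%nat with (S l - (m - y))%nat by lia; ring.
  - rewrite binomR_gt by lia; ring.
Qed.

Lemma a0_succ_pos r' m j : (1 <= j)%nat -> (m <= r')%nat ->
  a0 (S r') m j =
  sumR 0 r' (fun j' => if (j <=? S j')%nat then a0 r' m j' * faulhaber_coef j' j else 0).
Proof.
  intros Hj Hm; rewrite a0_succ; case_nat_tests; try lia.
  - rewrite (sumR_indicator _ (j - 1) (r' - m) r') by lia; apply sumR_ext; intros i Hi.
    case_nat_tests; auto; try lia; rewrite a0_eq0 by lia; ring.
  - symmetry; apply sumR_eq0; intros i Hi; case_nat_tests; auto.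
    rewrite a0_eq0 by lia; ring.
Qed.

Lemma a0_succ_0 r' m : (m <= S r')%nat ->
  a0 (S r') m 0 =
  - sumR 0 m (fun y => sumR 0 r' (fun j => a0 r' y j * faulhaber_pred_coef j (m - y))).
Proof.
  intros Hm; rewrite a0_succ; change (0 =? 0)%nat with true; cbv iota.
  destruct (Nat.eq_dec m (S r')) as [-> | Hne].
  - rewrite Nat.eqb_refl, sumR_last by lia.
    rewrite (sumR_eq0 (fun j => a0 r' (S r') j * _)), Rplus_0_r
      by (intros; rewrite a0_eq0 by lia; ring).
    f_equal; apply sumR_ext; intros y Hy.
    rewrite (sumR_single _ r' (r' - y)).
    + replace (S r' - y)%nat with (S (r' - y)) by lia.
      rewrite faulhaber_pred_coef_top; replace (S (r' - y) - 1)%nat with (r' - y)%nat by lia.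
      reflexivity.
    + lia.
    + intros i Hi Hne; destruct (Nat.leb_spec i (r' - y));
        [rewrite faulhaber_pred_coef_gt by lia | rewrite a0_eq0 by lia]; ring.
  - rewrite (proj2 (Nat.eqb_neq _ _) Hne), (proj2 (Nat.leb_le m r')) by lia.
    f_equal; apply sumR_ext; intros y Hy.
    rewrite (sumR_indicator _ (m - y - 1) (r' - y) r') by lia; apply sumR_ext; intros i Hi.
    case_nat_tests; try lia.
    + rewrite D_coef_eq_faulhaber_pred_coef by lia; reflexivity.
    + rewrite a0_eq0 by lia; ring.
    + rewrite faulhaber_pred_coef_gt by lia; ring.
Qed.

(* Since a(r'+1,m,j) = 0 for m + j > r' (a0_eq0), both sums may run up to r'. *)
Definition hh_expansion (p : Z) (r' n : nat) : R :=
  sumR 0 r' (fun m => sumR 0 r' (fun j => a0 r' m j * INR n ^ j * H n (p - Z.of_nat m))).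

Lemma sum_hh_expansion p r' n :
  sumR 1 n (hh_expansion p r') =
  sumR 0 r' (fun y => sumR 0 r' (fun j =>
    a0 r' y j * (faulhaber j (INR n) * H n (p - Z.of_nat y)))) -
  sumR 0 r' (fun y => sumR 0 r' (fun j =>
    a0 r' y j * sumR 0 (S j) (fun u =>
      faulhaber_pred_coef j u * H n (p - Z.of_nat y - Z.of_nat u)))).
Proof.
  unfold hh_expansion; rewrite sumR_swap, <- sumR_minus; apply sumR_ext; intros y Hy.
  rewrite sumR_swap, <- sumR_minus; apply sumR_ext; intros j Hj.
  rewrite <- Rmult_minus_distr_l, <- sum_H_mul_faulhaber_pred, <- sum_pow_mul_H.
  rewrite <- sumR_scal; apply sumR_ext; intros; ring.
Qed.

Lemma hh_expansion_succ_split p r' n :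
  hh_expansion p (S r') n =
  sumR 0 (S r') (fun m => a0 (S r') m 0 * H n (p - Z.of_nat m)) +
  sumR 0 (S r') (fun m => sumR 1 (S r') (fun j =>
    a0 (S r') m j * INR n ^ j * H n (p - Z.of_nat m))).
Proof.
  unfold hh_expansion; rewrite <- sumR_plus; apply sumR_ext; intros m Hm.
  rewrite sumR_first by lia; simpl pow; ring.
Qed.

Lemma hh_expansion_succ_pos p r' n :
  sumR 0 (S r') (fun m => sumR 1 (S r') (fun j =>
    a0 (S r') m j * INR n ^ j * H n (p - Z.of_nat m))) =
  sumR 0 r' (fun y => sumR 0 r' (fun j =>
    a0 r' y j * (faulhaber j (INR n) * H n (p - Z.of_nat y)))).
Proof.
  rewrite sumR_last by lia.
  rewrite (sumR_eq0 (fun j => a0 (S r') (S r') j * INR n ^ j * H n (p - Z.of_nat (S r')))),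
    Rplus_0_r
    by (intros; rewrite a0_eq0 by lia; ring).
  apply sumR_ext; intros m Hm.
  rewrite (sumR_ext _ (fun j => sumR 0 r' (fun j' =>
     (if (j <=? S j')%nat then a0 r' m j' * faulhaber_coef j' j else 0)
     * INR n ^ j * H n (p - Z.of_nat m)))).
  2:{ intros j Hj; rewrite a0_succ_pos, <- !sumR_scal_r by lia; reflexivity. }
  rewrite sumR_swap; apply sumR_ext; intros j' Hj'.
  unfold faulhaber; rewrite (sumR_indicator_hi _ 1 (S j') (S r')) by lia.
  rewrite <- sumR_scal_r, <- sumR_scal; apply sumR_ext; intros j Hj.
  destruct (Nat.leb_spec j (S j')); ring.
Qed.

(* Grouping the terms of the right-hand side by the total shift d = y + u of the
   exponent p. *)
Lemma hh_expansion_succ_const p r' n :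
  sumR 0 (S r') (fun m => a0 (S r') m 0 * H n (p - Z.of_nat m)) =
  - sumR 0 r' (fun y => sumR 0 r' (fun j =>
    a0 r' y j * sumR 0 (S j) (fun u =>
      faulhaber_pred_coef j u * H n (p - Z.of_nat y - Z.of_nat u)))).
Proof.
  set (F := fun y u => sumR 0 r' (fun j =>
     a0 r' y j * faulhaber_pred_coef j u * H n (p - Z.of_nat y - Z.of_nat u))).
  transitivity (- sumR 0 (S r') (fun d => sumR 0 d (fun y => F y (d - y)%nat))).
  { rewrite <- sumR_opp; apply sumR_ext; intros d Hd.
    rewrite a0_succ_0, Ropp_mult_distr_l_reverse, <- sumR_scal_r by lia; f_equal.
    apply sumR_ext; intros y Hy; unfold F; rewrite <- sumR_scal_r.
    apply sumR_ext; intros j Hj.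
    replace (p - Z.of_nat y - Z.of_nat (d - y))%Z with (p - Z.of_nat d)%Z by lia; ring. }
  rewrite <- sumR_antidiagonal; f_equal.
  rewrite (sumR_extend _ r' (S r')) by
    (try lia; intros; apply sumR_eq0; intros; rewrite a0_eq0 by lia; ring).
  apply sumR_ext; intros y Hy; unfold F; rewrite sumR_swap; apply sumR_ext; intros j Hj.
  destruct (Nat.leb_spec (y + j) r').
  - rewrite (sumR_extend _ (S j) (S r' - y)), <- sumR_scal
      by (try lia; intros; rewrite faulhaber_pred_coef_gt by lia; ring).
    apply sumR_ext; intros; ring.
  - rewrite a0_eq0, sumR_eq0 by (lia || (intros; ring)); ring.
Qed.

Lemma hh_eq_expansion p r' n : hh p r' n = hh_expansion p r' n.
Proof.
  revert n; induction r'; intros n.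
  - unfold hh_expansion; rewrite !sumR_singleton; simpl.
    replace (p - 0)%Z with p by lia; ring.
  - change (hh p (S r') n) with (sumR 1 n (hh p r')).
    rewrite (sumR_ext _ _ _ _ (fun i _ => IHr' i)), sum_hh_expansion.
    rewrite hh_expansion_succ_split, hh_expansion_succ_pos, hh_expansion_succ_const; ring.
Qed.

Lemma hyperH_expansion p s n : (1 <= s)%nat ->
  hyperH p s n = sumR 0 (s - 1) (fun l1 => sumR 0 (s - 1 - l1) (fun l2 =>
    a s l1 l2 * INR n ^ l2 * H n (p - Z.of_nat l1))).
Proof.
  intros Hs; unfold hyperH; rewrite hh_eq_expansion; unfold hh_expansion, a.
  apply sumR_ext; intros l1 Hl1; symmetry; apply sumR_extend; [lia |].
  intros; rewrite a0_eq0 by lia; ring.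
Qed.

(** * Partial fractions for the inverse binomial coefficient *)

Lemma binomR_1 n : binomR n 1 = INR n.
Proof.
  destruct n; [rewrite binomR_gt by lia; reflexivity |].
  rewrite binomR_fact by lia; replace (S n - 1)%nat with n by lia.
  rewrite INR_fact_S; simpl; field; apply INR_fact_neq_0.
Qed.

Lemma inv_binomR_partial_fractions k n : (1 <= k)%nat ->
  / binomR (n + k) k =
  sumR 1 k (fun r => (-1) ^ (r + 1) * INR r * binomR k r / (INR n + INR r)).
Proof.
  intros Hk; revert n; induction Hk as [| k Hk IH]; intros n.
  - rewrite sumR_singleton, Nat.add_1_r, binomR_1, binomR_nn, S_INR; simpl; field.
    pose proof (pos_INR n) as Hn; lra.
  - assert (HN : 0 < INR (S n)) by (apply lt_0_INR; lia).
    assert (Hpos : forall r, 0 < INR (S n) + INR r)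
      by (intros r; pose proof (pos_INR r) as Hr; lra).
    assert (Hsplit :
      sumR 1 k (fun r => (-1) ^ (r + 1) * INR r * binomR k r / (INR (S n) + INR r)) =
      1 - INR (S n) * sumR 1 k (fun r => (-1) ^ (r + 1) * binomR k r / (INR (S n) + INR r))).
    { rewrite <- (alt_sum_binomR k), <- sumR_scal, <- sumR_minus by lia.
      apply sumR_ext; intros r Hr; specialize (Hpos r); field; lra. }
    rewrite binomR_add_succ, Rinv_mult, Rinv_div, IH, Hsplit.
    set (T := sumR 1 k (fun r => (-1) ^ (r + 1) * binomR k r / (INR (S n) + INR r))).
    rewrite sumR_first, sumR_shift, binomR_1 by lia.
    rewrite (sumR_ext _
      (fun r => - INR (S k) * ((-1) ^ (r + 1) * binomR k r / (INR (S n) + INR r)))).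
    + rewrite sumR_scal; fold T; rewrite (S_INR n), INR_1 in *; simpl pow; field; lra.
    + intros r Hr; rewrite Rmult_assoc, binomR_absorb, !S_INR by lia.
      replace (S r + 1)%nat with (S (r + 1)) by lia; simpl pow.
      specialize (Hpos r); rewrite S_INR in Hpos; field; lra.
Qed.

(** * Absolute convergence of the series S(q,t,1,r,1) *)

Lemma ex_series_telescoping (u : nat -> R) :
  (forall n, u (S n) <= u n) -> (forall n, 0 <= u n) -> ex_series (fun n => u n - u (S n)).
Proof.
  intros Hdecr Hpos; destruct (ex_finite_lim_seq_decr u 0 Hdecr Hpos) as [l Hl].
  exists (u 0%nat - l); change (is_lim_seq (sum_n (fun k => u k - u (S k))) (u 0%nat - l)).
  apply (is_lim_seq_ext (fun n => u 0%nat - u (S n))).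
  - intros n; induction n; [rewrite sum_O; reflexivity |].
    rewrite sum_Sn, <- IHn; change plus with Rplus; simpl; ring.
  - apply is_lim_seq_minus'; [apply is_lim_seq_const | apply (is_lim_seq_incr_1 u l), Hl].
Qed.

Lemma Rdiv_le_cross x y d e : 0 < d -> 0 < e -> x * e <= y * d -> x / d <= y / e.
Proof.
  intros Hd He Hxy; unfold Rdiv.
  replace (x * / d) with ((x * e) * / (d * e)) by (field; lra).
  replace (y * / e) with ((y * d) * / (d * e)) by (field; lra).
  apply Rmult_le_compat_r; [left; apply Rinv_0_lt_compat, Rmult_lt_0_compat |]; auto.
Qed.

Lemma powerRZ_inv_1 x : powerRZ x (- 1) = / x.
Proof. simpl; rewrite Rmult_1_r; reflexivity. Qed.

Lemma INR_succ_ge1 n : 1 <= INR (S n).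
Proof. rewrite S_INR; pose proof (pos_INR n) as Hn; lra. Qed.

Lemma H_nonneg n q : 0 <= H n q.
Proof.
  rewrite <- (sumR_eq0 (fun _ => 0) 1 n) by auto; apply sumR_le; intros i Hi.
  apply powerRZ_le, lt_0_INR; lia.
Qed.

Lemma H1_succ_ge1 n : 1 <= H (S n) 1.
Proof.
  induction n.
  - unfold H; rewrite sumR_singleton, powerRZ_inv_1, INR_1, Rinv_1; lra.
  - rewrite H_succ, powerRZ_inv_1.
    assert (Hinv : 0 < / INR (S (S n))) by (apply Rinv_0_lt_compat, lt_0_INR; lia); lra.
Qed.

Lemma H_le_H1 n q : (1 <= q)%Z -> H n q <= H n 1.
Proof.
  intros Hq; apply sumR_le; intros i Hi.
  assert (Hi1 : 1 <= INR i) by (apply (le_INR 1); lia).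
  replace q with (Z.of_nat (S (Z.to_nat q - 1))) by lia.
  rewrite powerRZ_inv_1, powerRZ_neg', <- pow_powerRZ.
  apply Rinv_le_contravar; [lra |].
  rewrite <- (pow_1 (INR i)) at 1; apply Rle_pow; [lra | lia].
Qed.

Lemma H_le_pow n q : (q <= 0)%Z -> H n q <= INR n ^ S (Z.to_nat (- q)).
Proof.
  intros Hq; unfold H; simpl pow; rewrite <- sumR_const; apply sumR_le; intros i Hi.
  set (a := Z.to_nat (- q)); replace (- q)%Z with (Z.of_nat a) by lia; rewrite <- pow_powerRZ.
  apply pow_incr; split; [apply pos_INR | apply le_INR; lia].
Qed.

Lemma H_mul_le q t n : (1 <= t)%nat -> (2 <= q + Z.of_nat t)%Z ->
  H (S n) q * INR (S n) <= H (S n) 1 * INR (S n) ^ t.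
Proof.
  intros Ht Hqt; pose proof (INR_succ_ge1 n) as HN.
  assert (HNt : INR (S n) <= INR (S n) ^ t)
    by (rewrite <- (pow_1 (INR (S n))) at 1; apply Rle_pow; auto).
  pose proof (H1_succ_ge1 n) as Hh1; pose proof (H_nonneg (S n) q) as Hhq.
  destruct (Z_le_gt_dec 1 q) as [Hq | Hq].
  - pose proof (H_le_H1 (S n) q Hq) as Hle; apply Rmult_le_compat; lra.
  - assert (Hpow : INR (S n) ^ S (Z.to_nat (- q)) * INR (S n) <= INR (S n) ^ t).
    { rewrite <- tech_pow_Rmult, Rmult_comm; change (INR (S n) ^ S (S (Z.to_nat (- q)))
        <= INR (S n) ^ t); apply Rle_pow; [auto | lia]. }
    assert (Hle : H (S n) q <= INR (S n) ^ S (Z.to_nat (- q))) by (apply H_le_pow; lia).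
    assert (HNt0 : 0 <= INR (S n) ^ t) by (apply pow_le; lra); nra.
Qed.

Lemma S_term_bound q t r n : (1 <= t)%nat -> (2 <= q + Z.of_nat t)%Z ->
  Rabs (S_term q t r n) <= H (S n) 1 / (INR (S n) * INR (S n)).
Proof.
  intros Ht Hqt; unfold S_term; pose proof (INR_succ_ge1 n) as HN.
  pose proof (pos_INR r) as Hr; pose proof (H_mul_le q t n Ht Hqt) as Hmul.
  assert (HNt : 0 < INR (S n) ^ t) by (apply pow_lt; lra).
  unfold Rdiv; rewrite Rabs_mult, Rabs_mult, pow_1_abs, Rmult_1_l.
  rewrite (Rabs_right (H (S n) q)) by (apply Rle_ge, H_nonneg).
  rewrite Rabs_right by (apply Rle_ge; left; apply Rinv_0_lt_compat, Rmult_lt_0_compat; lra).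
  pose proof (H1_succ_ge1 n) as Hh1.
  apply Rdiv_le_cross; [apply Rmult_lt_0_compat; lra | nra |].
  assert (Hstep : H (S n) q * INR (S n) * INR (S n) <= H (S n) 1 * INR (S n) ^ t * INR (S n))
    by (apply Rmult_le_compat_r; lra).
  assert (Hrest : 0 <= H (S n) 1 * INR (S n) ^ t * INR r)
    by (apply Rmult_le_pos; [apply Rmult_le_pos |]; lra).
  nra.
Qed.

Lemma H1_succ_div_le n : H (S (S n)) 1 / INR (S (S n)) <= H (S n) 1 / INR (S n).
Proof.
  rewrite H_succ, (S_INR (S n)), powerRZ_inv_1.
  set (N := INR (S n)); set (h := H (S n) 1).
  assert (HN : 1 <= N) by apply INR_succ_ge1.
  assert (Hh : 1 <= h) by apply H1_succ_ge1.
  assert (Hinv : / (N + 1) * (N + 1) = 1) by (field; lra).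
  assert (Hinv0 : 0 < / (N + 1)) by (apply Rinv_0_lt_compat; lra).
  apply Rdiv_le_cross; nra.
Qed.

(* H_n / n^2 <= 2 H_n / (n (n+1)) = 2 (H_n / n - H_(n+1) / (n+1)) + 2 / (n+1)^2,
   and both parts telescope. *)
Lemma H1_div_sq_le n :
  H (S n) 1 / (INR (S n) * INR (S n)) <=
  2 * (H (S n) 1 / INR (S n) - H (S (S n)) 1 / INR (S (S n)))
  + 2 * (/ INR (S n) - / INR (S (S n))).
Proof.
  rewrite (H_succ (S n)), (S_INR (S n)), powerRZ_inv_1.
  set (N := INR (S n)); set (h := H (S n) 1).
  assert (HN : 1 <= N) by apply INR_succ_ge1.
  assert (Hh : 1 <= h) by apply H1_succ_ge1.
  assert (E1 : h / (N * N) <= 2 * h / (N * (N + 1))).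
  { assert (HhN : 0 <= h * N * (N - 1)) by (apply Rmult_le_pos; [apply Rmult_le_pos |]; lra).
    apply Rdiv_le_cross; nra. }
  assert (E2 : / ((N + 1) * (N + 1)) <= / (N * (N + 1))) by (apply Rinv_le_contravar; nra).
  replace (2 * (h / N - (h + / (N + 1)) / (N + 1)) + 2 * (/ N - / (N + 1)))
    with (2 * h / (N * (N + 1)) - 2 * / ((N + 1) * (N + 1)) + 2 * / (N * (N + 1)))
    by (field; lra).
  lra.
Qed.

Lemma ex_series_H1_div_sq : ex_series (fun n => H (S n) 1 / (INR (S n) * INR (S n))).
Proof.
  assert (Hpos : forall n, 0 < INR (S n)) by (intros; apply lt_0_INR; lia).
  pose (u := fun n => H (S n) 1 / INR (S n)); pose (v := fun n => / INR (S n)).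
  apply (@ex_series_le R_AbsRing R_CompleteNormedModule _
    (fun n => 2 * (u n - u (S n)) + 2 * (v n - v (S n)))).
  - intros n; change (Rabs (H (S n) 1 / (INR (S n) * INR (S n)))
      <= 2 * (u n - u (S n)) + 2 * (v n - v (S n))).
    rewrite Rabs_right; [apply H1_div_sq_le |].
    apply Rle_ge, Rdiv_le_0_compat; [apply H_nonneg | apply Rmult_lt_0_compat; auto].
  - apply (ex_series_plus (fun n => 2 * (u n - u (S n))) (fun n => 2 * (v n - v (S n)))).
    + apply (ex_series_scal 2 (fun n => u n - u (S n))), ex_series_telescoping; unfold u.
      * apply H1_succ_div_le.
      * intros n; apply Rdiv_le_0_compat; auto; apply H_nonneg.
    + apply (ex_series_scal 2 (fun n => v n - v (S n))), ex_series_telescoping; unfold v.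
      * intros n; apply Rinv_le_contravar; [apply Hpos | rewrite (S_INR (S n)); lra].
      * intros n; left; apply Rinv_0_lt_compat, Hpos.
Qed.

Lemma S_term_ex_series q t r : (1 <= t)%nat -> (2 <= q + Z.of_nat t)%Z ->
  ex_series (S_term q t r).
Proof.
  intros Ht Hqt.
  apply (@ex_series_le R_AbsRing R_CompleteNormedModule _
    (fun n => H (S n) 1 / (INR (S n) * INR (S n)))); [| apply ex_series_H1_div_sq].
  intros n; apply S_term_bound; assumption.
Qed.

(** * Termwise summation *)

Lemma is_series_R0 : is_series (fun _ : nat => 0) 0.
Proof.
  change (is_lim_seq (sum_n (fun _ : nat => 0)) 0).
  apply (is_lim_seq_ext (fun _ => 0)); [| apply is_lim_seq_const].
  intros n; induction n; [rewrite sum_O; reflexivity |].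
  rewrite sum_Sn, <- IHn; change plus with Rplus; simpl; ring.
Qed.

Lemma is_series_scal_R c (u : nat -> R) l : is_series u l -> is_series (fun n => c * u n) (c * l).
Proof. apply (is_series_scal c u l). Qed.

Lemma is_series_sumN (F : nat -> nat -> R) (L : nat -> R) lo c :
  (forall i, (lo <= i < lo + c)%nat -> is_series (F i) (L i)) ->
  is_series (fun n => sumN (fun i => F i n) lo c) (sumN L lo c).
Proof.
  revert lo; induction c; intros lo HF; simpl; [apply is_series_R0 |].
  apply (is_series_plus (F lo) (fun n => sumN (fun i => F i n) (S lo) c)).
  - apply HF; lia.
  - apply IHc; intros; apply HF; lia.
Qed.

Lemma is_series_sumR (F : nat -> nat -> R) (L : nat -> R) lo hi :
  (forall i, (lo <= i <= hi)%nat -> is_series (F i) (L i)) ->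
  is_series (fun n => sumR lo hi (fun i => F i n)) (sumR lo hi L).
Proof. intros HF; apply is_series_sumN; intros; apply HF; lia. Qed.

Lemma alt_hyperH_term_expansion s p m k n : (1 <= s)%nat -> (1 <= k)%nat -> (s <= m)%nat ->
  (-1) ^ (S n + 1) * hyperH p s (S n) / (INR (S n) ^ m * binomR (S n + k) k) =
  sumR 0 (s - 1) (fun l1 => sumR 0 (s - 1 - l1) (fun l2 =>
    a s l1 l2 * sumR 1 k (fun r =>
      (-1) ^ (r + 1) * INR r * binomR k r * S_term (p - Z.of_nat l1) (m - l2) r n))).
Proof.
  intros Hs Hk Hsm; set (N := S n).
  assert (HN : 0 < INR N) by (apply lt_0_INR; unfold N; lia).
  assert (HB : 0 < binomR (N + k) k) by (apply binomR_pos; lia).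
  transitivity ((-1) ^ (N + 1) / INR N ^ m * hyperH p s N * / binomR (N + k) k).
  { unfold Rdiv; rewrite Rinv_mult; ring. }
  rewrite inv_binomR_partial_fractions, hyperH_expansion by auto.
  set (c := (-1) ^ (N + 1) / INR N ^ m); set (T := sumR 1 k _).
  rewrite <- sumR_scal, <- sumR_scal_r; apply sumR_ext; intros l1 Hl1.
  rewrite <- sumR_scal, <- sumR_scal_r; apply sumR_ext; intros l2 Hl2.
  unfold T; rewrite <- !sumR_scal; apply sumR_ext; intros r Hr.
  unfold c, S_term; fold N.
  replace (INR N ^ m) with (INR N ^ l2 * INR N ^ (m - l2)) by (rewrite <- pow_add; f_equal; lia).
  assert (HNl2 : 0 < INR N ^ l2) by (apply pow_lt; auto).
  assert (HNml2 : 0 < INR N ^ (m - l2)) by (apply pow_lt; auto).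
  pose proof (pos_INR r) as Hr0.
  field; repeat split; lra.
Qed.

Theorem theorem2 (s p m k : nat)
  (hs : (1 <= s)%nat) (hp : (1 <= p)%nat) (hm : (1 <= m)%nat) (hk : (1 <= k)%nat)
  (hms : (s <= m)%nat) :
  is_series
    (fun n : nat => let N := S n in
       (-1) ^ (N + 1) * hyperH (Z.of_nat p) s N / (INR N ^ m * binomR (N + k) k))
    (sumR 0 (s - 1) (fun l1 =>
       sumR 0 (s - 1 - l1) (fun l2 =>
         a s l1 l2 *
         sumR 1 k (fun r =>
           (-1) ^ (r + 1) * INR r * binomR k r
           * Sser (Z.of_nat p - Z.of_nat l1) (m - l2) r)))).
Proof.
  eapply is_series_ext.
  { intros n; symmetry; apply alt_hyperH_term_expansion; assumption. }
  apply is_series_sumR; intros l1 Hl1; apply is_series_sumR; intros l2 Hl2.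
  apply is_series_scal_R, is_series_sumR; intros r Hr; apply is_series_scal_R.
  apply Series_correct, S_term_ex_series; lia.
Qed.
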